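(* Let $\mathcal{X}=\{x_k\}_{k=1}^\infty$ be a frame for the real Hilbert space $\ell_2$. The following are equivalent: (1) $\mathcal{X}$ is injective; (2) $\overline{\mathrm{span}}\{\tilde{x}_k\}_{k=1}^\infty=\tilde{\mathbb{H}}$.
   Context: A family $\{x_k\}$ is called injective if whenever a Hilbert–Schmidt self-adjoint operator $T$ on $\ell_2$ satisfies $\langle Tx_k,x_k\rangle=0$ for all $k$, then $T=0$. Let $\tilde{\mathbb{H}}=\left(\sum_{i=1}^\infty\oplus\ell_2\right)_{\ell_2}$ be the $\ell_2$-direct sum of countably many copies of real $\ell_2$, with elements $\vec{x}=(\vec{x}_1,\vec{x}_2,\dots)$ and inner product $\langle\vec{x},\vec{y}\rangle=\sum_i\langle\vec{x}_i,\vec{y}_i\rangle$. For $x=(x_i)_{i=1}^\infty\in\ell_2$ (real), define $\tilde{x}=(\vec{x}_1,\vec{x}_2,\dots)\in\tilde{\mathbb{H}}$ where $\vec{x}_n=(x_nx_n,x_nx_{n+1},x_nx_{n+2},\dots)$ for each $n$. *)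

From Stdlib Require Import Reals Lra.
From Coquelicot Require Import Coquelicot.
Open Scope R_scope.

(* Real sequences; l2 = square-summable sequences (indices start at 0). *)
Definition l2 (x : nat -> R) : Prop := ex_series (fun i => (x i) ^ 2).
Definition norm2 (x : nat -> R) : R := Series (fun i => (x i) ^ 2).
Definition inner (x y : nat -> R) : R := Series (fun i => x i * y i).

Definition unitv (j : nat) : nat -> R := fun i => if Nat.eqb i j then 1 else 0.

Definition is_frame (X : nat -> nat -> R) : Prop :=
  (forall k, l2 (X k)) /\
  exists A B : R, 0 < A /\ 0 < B /\
    forall x, l2 x ->
      ex_series (fun k => (inner x (X k)) ^ 2) /\
      A * norm2 x <= Series (fun k => (inner x (X k)) ^ 2) /\
      Series (fun k => (inner x (X k)) ^ 2) <= B * norm2 x.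

(* Hilbert-Schmidt self-adjoint (bounded linear) operator on l2,
   represented as a map on sequences whose behaviour on l2 is what matters. *)
Definition is_HS_selfadjoint (T : (nat -> R) -> (nat -> R)) : Prop :=
  (forall x, l2 x -> l2 (T x)) /\
  (forall (a : R) x y, l2 x -> l2 y ->
      T (fun i => a * x i + y i) = (fun i => a * T x i + T y i)) /\
  (exists C : R, forall x, l2 x -> norm2 (T x) <= C * norm2 x) /\
  ex_series (fun j => norm2 (T (unitv j))) /\
  (forall x y, l2 x -> l2 y -> inner (T x) y = inner x (T y)).

Definition injective_family (X : nat -> nat -> R) : Prop :=
  forall T, is_HS_selfadjoint T ->
    (forall k, inner (T (X k)) (X k) = 0) ->
    forall x, l2 x -> T x = (fun _ => 0).

(* The l2-direct sum H~ of countably many copies of l2: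
   y : nat -> (nat -> R), y n = the n-th component. *)
Definition in_Htilde (y : nat -> nat -> R) : Prop :=
  (forall n, l2 (y n)) /\ ex_series (fun n => norm2 (y n)).
Definition normH2 (y : nat -> nat -> R) : R := Series (fun n => norm2 (y n)).

Definition tilde (x : nat -> R) : nat -> nat -> R := fun n m => x n * x (n + m)%nat.

Fixpoint lincomb (X : nat -> nat -> R) (c : nat -> R) (N : nat) : nat -> nat -> R :=
  match N with
  | O => fun _ _ => 0
  | S N' => fun n m => lincomb X c N' n m + c N' * tilde (X N') n m
  end.

(* closed span of {x~_k} equals H~ : the span is dense in H~ *)
Definition closed_span_tilde_is_Htilde (X : nat -> nat -> R) : Prop :=
  forall y, in_Htilde y -> forall eps, 0 < eps ->
    exists (N : nat) (c : nat -> R),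
      normH2 (fun n m => y n m - lincomb X c N n m) < eps.

(** A symmetric Hilbert-Schmidt matrix [t] and the element [z] of H~ with components
    [z_n = (t_nn, 2 t_n(n+1), 2 t_n(n+2), ...)] determine each other, and the quadratic
    form of [t] is [<t x, x> = sum_n t_nn x_n^2 + 2 sum_(n<m) t_nm x_n x_m = <z, x~>].
    So the self-adjoint Hilbert-Schmidt operators [T] with [<T x_k, x_k> = 0] for all [k]
    correspond exactly to the vectors [z] of H~ orthogonal to every [x~_k]. Injectivity
    says that only [T = 0] qualifies; density of the span of the [x~_k] says that only
    [z = 0] does, by the projection theorem in the complete space H~. *)

From Stdlib Require Import Reals Lra Lia Classical ClassicalEpsilon FunctionalExtensionality.
From Coquelicot Require Import Coquelicot.
Open Scope R_scope.

(** * Series of real numbers *)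

(** Specializations to [R] of Coquelicot's generic lemmas, which [apply] cannot
    unify with goals stated over [R]. *)
Lemma ex_series_ext_R (a b : nat -> R) :
  (forall n, a n = b n) -> ex_series a -> ex_series b.
Proof. apply (ex_series_ext a b). Qed.

Lemma ex_series_plus_R (a b : nat -> R) :
  ex_series a -> ex_series b -> ex_series (fun n => a n + b n).
Proof. apply (ex_series_plus a b). Qed.

Lemma ex_series_scal_l_R (c : R) (a : nat -> R) :
  ex_series a -> ex_series (fun n => c * a n).
Proof.
  intro H. apply (ex_series_ext_R (fun n => a n * c)); [intro; ring|now apply ex_series_scal_r].
Qed.

Lemma ex_series_Rabs_le (a g : nat -> R) :
  (forall n, Rabs (a n) <= g n) -> ex_series g -> ex_series a.
Proof. apply (ex_series_le a g). Qed.

Lemma ex_series_nonneg_le (a g : nat -> R) :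
  (forall n, 0 <= a n <= g n) -> ex_series g -> ex_series a.
Proof.
  intro H. apply ex_series_Rabs_le. intro n. rewrite Rabs_right; [apply H|apply Rle_ge, H].
Qed.

Lemma is_series_partial_sums (a : nat -> R) (l : R) :
  is_series a l <-> is_lim_seq (sum_f_R0 a) l.
Proof. rewrite is_series_Reals, is_lim_seq_Reals. reflexivity. Qed.

Lemma Series_partial_sums (a : nat -> R) :
  ex_series a -> is_lim_seq (sum_f_R0 a) (Series a).
Proof. intro H. apply is_series_partial_sums, Series_correct, H. Qed.

Lemma is_series_single (f : nat -> R) (j : nat) :
  (forall i, i <> j -> f i = 0) -> is_series f (f j).
Proof.
  intro H. apply is_series_partial_sums, is_lim_seq_incr_n with (N := j).
  apply is_lim_seq_ext with (fun _ => f j); [|apply is_lim_seq_const].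
  assert (Hlow : forall k, (k < j)%nat -> sum_f_R0 f k = 0).
  { induction k as [|k IHk]; intro Hk; simpl; [apply H; lia|]. rewrite IHk, H by lia. ring. }
  intro n. induction n as [|n IH].
  - destruct j as [|j]; [reflexivity|]. simpl. rewrite Hlow by lia. ring.
  - simpl. rewrite IH, H by lia. ring.
Qed.

Lemma Series_eq0 (a : nat -> R) : (forall n, a n = 0) -> Series a = 0.
Proof.
  intro H. rewrite (Series_ext a (fun _ => 0)) by exact H.
  apply is_series_unique, (is_series_single (fun _ => 0) 0). reflexivity.
Qed.

Section NonnegSeries.

Variable a : nat -> R.
Hypothesis a_nonneg : forall n, 0 <= a n.

Lemma ex_series_bounded_partial_sums (M : R) :
  (forall N, sum_f_R0 a N <= M) -> ex_series a /\ Series a <= M.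
Proof.
  intro HM.
  assert (Hinc : forall n, sum_f_R0 a n <= sum_f_R0 a (S n)).
  { intro n. simpl. specialize (a_nonneg (S n)). lra. }
  destruct (ex_finite_lim_seq_incr _ M Hinc HM) as [l Hl].
  assert (Hs : is_series a l) by now apply is_series_partial_sums.
  split; [now exists l|].
  rewrite (is_series_unique _ _ Hs).
  exact (is_lim_seq_le (sum_f_R0 a) (fun _ => M) l M HM Hl (is_lim_seq_const M)).
Qed.

Lemma term_le_sum_f_R0 (n : nat) : a n <= sum_f_R0 a n.
Proof.
  destruct n as [|n]; simpl; [lra|]. pose proof (cond_pos_sum a n a_nonneg). lra.
Qed.

Hypothesis a_summable : ex_series a.

Lemma sum_le_Series (N : nat) : sum_f_R0 a N <= Series a.
Proof.
  apply is_lim_seq_incr_compare; [now apply Series_partial_sums|].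
  intro n. simpl. specialize (a_nonneg (S n)). lra.
Qed.

Lemma term_le_Series (n : nat) : a n <= Series a.
Proof.
  apply Rle_trans with (sum_f_R0 a n); [apply term_le_sum_f_R0|apply sum_le_Series].
Qed.

Lemma Series_nonneg : 0 <= Series a.
Proof. apply Rle_trans with (a 0%nat); [apply a_nonneg|apply term_le_Series]. Qed.

Lemma Series_shift_le (k : nat) : Series (fun m => a (k + m)%nat) <= Series a.
Proof.
  destruct k as [|k]; [right; apply Series_ext; reflexivity|].
  rewrite (Series_incr_n a (S k)) by (lia || assumption). simpl pred.
  pose proof (cond_pos_sum a k a_nonneg). lra.
Qed.

End NonnegSeries.

Lemma sum_f_R0_lim (u : nat -> nat -> R) (l : nat -> R) (M : nat) :
  (forall i, is_lim_seq (fun J => u J i) (l i)) ->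
  is_lim_seq (fun J => sum_f_R0 (u J) M) (sum_f_R0 l M).
Proof.
  intro H. induction M as [|M IH]; simpl; [apply H|]. now apply is_lim_seq_plus'.
Qed.

Lemma Series_dominated_cvg_0 (u : nat -> nat -> R) (g : nat -> R) :
  (forall J i, Rabs (u J i) <= g i) -> ex_series g ->
  (forall i, is_lim_seq (fun J => u J i) 0) ->
  is_lim_seq (fun J => Series (u J)) 0.
Proof.
  intros Hb Hg Hl.
  (* Split at [M]: the head tends to 0 term by term, the tail is dominated by that of [g]. *)
  assert (Hg0 : forall i, 0 <= g i) by (intro i; eapply Rle_trans; [apply Rabs_pos|apply (Hb 0%nat)]).
  assert (Hex : forall J, ex_series (fun i => Rabs (u J i))).
  { intro J. apply (ex_series_Rabs_le _ g); auto. intro; rewrite Rabs_Rabsolu; auto. }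
  apply is_lim_seq_Reals. intros eps Heps.
  assert (Htail : is_lim_seq (fun M => Series g - sum_f_R0 g M) 0).
  { replace 0 with (Series g - Series g) by ring.
    apply is_lim_seq_minus'; [apply is_lim_seq_const|now apply Series_partial_sums]. }
  apply is_lim_seq_Reals in Htail. destruct (Htail (eps / 2)) as [M HM]; [lra|].
  specialize (HM M (le_n _)). unfold R_dist in HM.
  assert (Hhead : is_lim_seq (fun J => sum_f_R0 (fun i => Rabs (u J i)) M) 0).
  { replace 0 with (sum_f_R0 (fun _ : nat => 0) M)
      by (clear; induction M; simpl; lra).
    apply (sum_f_R0_lim (fun J i => Rabs (u J i))). intro i.
    pose proof (is_lim_seq_abs _ _ (Hl i)) as H. simpl in H. now rewrite Rabs_R0 in H. }
  apply is_lim_seq_Reals in Hhead. destruct (Hhead (eps / 2)) as [N HN]; [lra|].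
  exists N. intros J HJ. specialize (HN J HJ). unfold R_dist in *. rewrite Rminus_0_r in *.
  rewrite Rabs_right in HN by (apply Rle_ge, cond_pos_sum; intro; apply Rabs_pos).
  eapply Rle_lt_trans; [now apply Series_Rabs|].
  rewrite (Series_incr_n _ (S M)) by (lia || apply Hex). simpl pred.
  assert (Series (fun k => Rabs (u J (S M + k)%nat)) <= Series (fun k => g (S M + k)%nat)).
  { apply Series_le; [intro; split; [apply Rabs_pos|apply Hb]|now apply ex_series_incr_n]. }
  assert (Hsplit : Series g = sum_f_R0 g M + Series (fun k => g (S M + k)%nat))
    by (rewrite (Series_incr_n g (S M)); auto; lia).
  assert (0 <= Series (fun k => g (S M + k)%nat))
    by (apply Series_nonneg; [auto|now apply ex_series_incr_n]).
  rewrite Rabs_right in HM by lra. lra.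
Qed.

Lemma Series_dominated_cvg (f : nat -> nat -> R) (g h : nat -> R) :
  (forall J i, Rabs (f J i) <= g i) -> ex_series g ->
  (forall i, is_lim_seq (fun J => f J i) (h i)) ->
  is_lim_seq (fun J => Series (f J)) (Series h).
Proof.
  intros Hb Hg Hl.
  assert (Hh : forall i, Rabs (h i) <= g i).
  { intro i. pose proof (is_lim_seq_abs _ _ (Hl i)) as H.
    exact (is_lim_seq_le (fun J => Rabs (f J i)) (fun _ => g i) _ _ (fun J => Hb J i) H
             (is_lim_seq_const _)). }
  assert (HexF : forall J, ex_series (f J)) by (intro J; apply (ex_series_Rabs_le _ g); auto).
  assert (HexH : ex_series h) by (apply (ex_series_Rabs_le _ g); auto).
  assert (Hdiff : is_lim_seq (fun J => Series (fun i => f J i - h i)) 0).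
  { apply (Series_dominated_cvg_0 _ (fun i => 2 * g i)).
    - intros J i. eapply Rle_trans; [apply Rabs_triang|]. rewrite Rabs_Ropp.
      pose proof (Hb J i). pose proof (Hh i). lra.
    - now apply ex_series_scal_l_R.
    - intro i. replace 0 with (h i - h i) by ring.
      apply is_lim_seq_minus'; [apply Hl|apply is_lim_seq_const]. }
  apply is_lim_seq_ext with (fun J => Series (fun i => f J i - h i) + Series h).
  - intro J. rewrite Series_minus; auto. ring.
  - replace (Finite (Series h)) with (Finite (0 + Series h)) by (f_equal; ring).
    apply is_lim_seq_plus'; [exact Hdiff|apply is_lim_seq_const].
Qed.

Lemma ex_series_sum_f_R0 (a : nat -> nat -> R) (N : nat) :
  (forall j, ex_series (a j)) ->
  ex_series (fun i => sum_f_R0 (fun j => a j i) N) /\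
  Series (fun i => sum_f_R0 (fun j => a j i) N) = sum_f_R0 (fun j => Series (a j)) N.
Proof.
  intro H. induction N as [|N [IH1 IH2]]; simpl; [split; [apply H|reflexivity]|].
  split; [now apply ex_series_plus_R|]. rewrite Series_plus, IH2; auto.
Qed.

Lemma Series_swap (a : nat -> nat -> R) :
  (forall i, ex_series (fun j => Rabs (a i j))) ->
  ex_series (fun i => Series (fun j => Rabs (a i j))) ->
  (forall j, ex_series (fun i => a i j)) /\
  ex_series (fun j => Series (fun i => a i j)) /\
  Series (fun j => Series (fun i => a i j)) = Series (fun i => Series (fun j => a i j)).
Proof.
  intros Hrow Hsum.
  set (r := fun i => Series (fun j => Rabs (a i j))).
  assert (Habs : forall i j, 0 <= Rabs (a i j)) by (intros; apply Rabs_pos).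
  assert (Hr : forall i j, Rabs (a i j) <= r i)
    by (intros i j; apply (term_le_Series (fun j => Rabs (a i j))); auto).
  assert (Hcol_abs : forall j, ex_series (fun i => Rabs (a i j))).
  { intro j. apply (ex_series_Rabs_le _ r); auto. intro; rewrite Rabs_Rabsolu; auto. }
  assert (Hcol : forall j, ex_series (fun i => a i j))
    by (intro j; apply (ex_series_Rabs_le _ r); auto).
  set (q := fun j => Series (fun i => Rabs (a i j))).
  assert (Hq : ex_series q).
  { apply (ex_series_bounded_partial_sums q (fun j => Series_nonneg _ (fun i => Habs i j) (Hcol_abs j)) (Series r)).
    intro N. unfold q.
    destruct (ex_series_sum_f_R0 (fun j i => Rabs (a i j)) N Hcol_abs) as [E1 E2].
    rewrite <- E2. apply Series_le; auto. intro i. split.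
    - apply cond_pos_sum; auto.
    - apply (sum_le_Series (fun j => Rabs (a i j))); auto. }
  assert (Hc : ex_series (fun j => Series (fun i => a i j))).
  { apply (ex_series_Rabs_le _ q); auto. intro j. apply Series_Rabs. auto. }
  repeat split; auto.
  assert (L : is_lim_seq (fun N => Series (fun i => sum_f_R0 (fun j => a i j) N))
                         (Series (fun i => Series (fun j => a i j)))).
  { apply (Series_dominated_cvg _ r).
    - intros N i. eapply Rle_trans; [apply sum_f_R0_triangle|].
      apply (sum_le_Series (fun j => Rabs (a i j))); auto.
    - exact Hsum.
    - intro i. apply Series_partial_sums, ex_series_Rabs. auto. }
  apply is_lim_seq_ext with (v := sum_f_R0 (fun j => Series (fun i => a i j))) in L.
  - apply is_lim_seq_unique in L. rewrite (is_lim_seq_unique _ _ (Series_partial_sums _ Hc)) in L.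
    now injection L.
  - intro N. apply (ex_series_sum_f_R0 (fun j i => a i j) N Hcol).
Qed.

Definition fold_wt (m : nat) : R := match m with O => 1 | _ => 2 end.

Lemma fold_wt_bounds (m : nat) : 1 <= fold_wt m <= 2.
Proof. destruct m; simpl; lra. Qed.

Section SymmetricDoubleSeries.

Variable b : nat -> nat -> R.
Hypothesis b_sym : forall i j, b i j = b j i.
Hypothesis b_row : forall i, ex_series (fun j => Rabs (b i j)).
Hypothesis b_sum : ex_series (fun i => Series (fun j => Rabs (b i j))).

(** Summed by columns, the strictly lower part becomes, by symmetry, the
    off-diagonal half of the folded series. *)
Let lower (i j : nat) : R := if (j <? i)%nat then b i j else 0.

Let lower_row_abs (i : nat) : ex_series (fun j => Rabs (lower i j)).
Proof.
  apply (ex_series_Rabs_le _ (fun j => Rabs (b i j))); [intro j|apply b_row]. rewrite Rabs_Rabsolu.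
  unfold lower. destruct (j <? i)%nat; [lra|rewrite Rabs_R0; apply Rabs_pos].
Qed.

Let ex_series_row (i : nat) : ex_series (b i).
Proof. apply ex_series_Rabs, b_row. Qed.

Let ex_series_upper (n : nat) : ex_series (fun m => b n (n + m)%nat).
Proof. now apply (ex_series_incr_n (b n) n). Qed.

Lemma Series_row_split (i : nat) :
  Series (b i) = Series (lower i) + Series (fun m => b i (i + m)%nat).
Proof.
  assert (Hlow : ex_series (lower i)) by apply ex_series_Rabs, lower_row_abs.
  rewrite (Series_ext (b i) (fun j => lower i j + (b i j - lower i j))) by (intro; ring).
  rewrite Series_plus; auto.
  - f_equal. rewrite (Series_incr_n_aux _ i).
    + apply Series_ext. intro m. unfold lower.
      replace (i + m <? i)%nat with false by (symmetry; apply Nat.ltb_ge; lia). ring.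
    + intros k Hk. unfold lower. replace (k <? i)%nat with true by (symmetry; now apply Nat.ltb_lt). ring.
  - apply (ex_series_ext_R (fun j => b i j + (-1) * lower i j)); [intro; ring|].
    apply ex_series_plus_R; [apply ex_series_row|now apply ex_series_scal_l_R].
Qed.

Lemma Series_fold_row (n : nat) :
  Series (fun m => fold_wt m * b n (n + m)%nat) =
  Series (fun m => b n (n + m)%nat) + Series (fun i => lower i n).
Proof.
  assert (Hsh : ex_series (fun m => b n (n + S m)%nat))
    by apply (ex_series_incr_1 (fun m => b n (n + m)%nat)), ex_series_upper.
  assert (Hcol : Series (fun i => lower i n) = Series (fun m => b n (n + S m)%nat)).
  { rewrite (Series_incr_n_aux _ (S n)).
    - apply Series_ext. intro m. unfold lower.
      replace (n <? S n + m)%nat with true by (symmetry; apply Nat.ltb_lt; lia).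
      rewrite b_sym. f_equal. lia.
    - intros k Hk. unfold lower. replace (n <? k)%nat with false by (symmetry; apply Nat.ltb_ge; lia).
      reflexivity. }
  assert (Hfold : ex_series (fun m => fold_wt m * b n (n + m)%nat)).
  { apply (ex_series_Rabs_le _ (fun m => 2 * Rabs (b n (n + m)%nat))).
    - intro m. rewrite Rabs_mult. pose proof (fold_wt_bounds m).
      rewrite (Rabs_right (fold_wt m)) by lra.
      apply Rmult_le_compat_r; [apply Rabs_pos|lra].
    - apply ex_series_scal_l_R. now apply (ex_series_incr_n (fun j => Rabs (b n j)) n). }
  rewrite Hcol, (Series_incr_1 _ Hfold), (Series_incr_1 (fun m => b n (n + m)%nat)) by auto.
  rewrite (Series_ext (fun k => fold_wt (S k) * b n (n + S k)%nat)
                      (fun k => 2 * b n (n + S k)%nat)) by reflexivity.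
  rewrite Series_scal_l. simpl. ring.
Qed.

Lemma Series_symmetric_fold :
  Series (fun i => Series (b i)) =
  Series (fun n => Series (fun m => fold_wt m * b n (n + m)%nat)).
Proof.
  assert (Hlow_sum : ex_series (fun i => Series (fun j => Rabs (lower i j)))).
  { apply (ex_series_Rabs_le _ (fun i => Series (fun j => Rabs (b i j)))); [intro i|exact b_sum].
    rewrite Rabs_right by (apply Rle_ge, Series_nonneg; [intro; apply Rabs_pos|apply lower_row_abs]).
    apply Series_le; [|apply b_row]. intro j. split; [apply Rabs_pos|].
    unfold lower. destruct (j <? i)%nat; [lra|rewrite Rabs_R0; apply Rabs_pos]. }
  destruct (Series_swap lower lower_row_abs Hlow_sum) as [_ [Hcols Hswap]].
  assert (Hrows : ex_series (fun i => Series (lower i))).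
  { apply (ex_series_Rabs_le _ _ (fun i => Series_Rabs _ (lower_row_abs i)) Hlow_sum). }
  assert (Hrow_sums : ex_series (fun i => Series (b i))).
  { apply (ex_series_Rabs_le _ _ (fun i => Series_Rabs _ (b_row i)) b_sum). }
  assert (Hdiag : ex_series (fun i => Series (fun m => b i (i + m)%nat))).
  { apply (ex_series_ext_R (fun i => Series (b i) + (-1) * Series (lower i))).
    - intro i. rewrite Series_row_split. ring.
    - apply ex_series_plus_R; [auto|now apply ex_series_scal_l_R]. }
  rewrite (Series_ext _ _ Series_row_split), (Series_ext _ _ Series_fold_row).
  rewrite !Series_plus, Hswap; auto. apply Rplus_comm.
Qed.

End SymmetricDoubleSeries.

Lemma discriminant_le (A B S : R) :
  (forall t, 0 <= A - 2 * t * S + t * t * B) -> S * S <= A * B.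
Proof.
  intro H. destruct (Req_dec B 0) as [HB|HB].
  - subst B. destruct (Req_dec S 0) as [HS|HS]; [subst; nra|].
    specialize (H ((A + 1) / (2 * S))).
    assert (2 * ((A + 1) / (2 * S)) * S = A + 1) by (field; auto). nra.
  - assert (HB0 : 0 < B).
    { destruct (Rlt_le_dec 0 B) as [|HBn]; [assumption|exfalso].
      set (t := (Rabs A + 1) / (- B) + 1).
      assert (Ht : t * B = - (Rabs A + 1) + B) by (unfold t; field; lra).
      assert (Ht1 : 1 <= t).
      { unfold t. assert (0 < (Rabs A + 1) / (- B)); [|lra].
        apply Rdiv_lt_0_compat; [pose proof (Rabs_pos A)|]; lra. }
      pose proof (H t). pose proof (H (- t)). pose proof (Rle_abs A).
      assert (0 <= t * (t - 1)) by nra.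
      assert (t * t * B <= t * B) by nra.
      replace (- t * - t * B) with (t * t * B) in * by ring. lra. }
    specialize (H (S / B)).
    replace (A - 2 * (S / B) * S + S / B * (S / B) * B) with (A - S * S / B) in H by (field; lra).
    assert (S * S / B <= A) by lra.
    apply Rmult_le_compat_r with (r := B) in H0; [|lra].
    replace (S * S / B * B) with (S * S) in H0 by (field; lra). lra.
Qed.

Lemma le_0_of_le_div_INR (r K : R) : (forall l : nat, r <= K / INR (S l)) -> r <= 0.
Proof.
  intro H. destruct (Rle_lt_dec r 0) as [|Hr]; [assumption|exfalso].
  assert (HK : 0 < Rabs K + 1) by (pose proof (Rabs_pos K); lra).
  destruct (archimed_cor1 (r / (Rabs K + 1))) as [[|N] [HN HN0]];
    [now apply Rdiv_lt_0_compat|lia|].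
  specialize (H N).
  assert (HI : 0 < INR (S N)) by (apply lt_0_INR; lia).
  assert (K / INR (S N) <= Rabs K * / INR (S N))
    by (apply Rmult_le_compat_r; [left; now apply Rinv_0_lt_compat|apply Rle_abs]).
  assert (Rabs K * / INR (S N) <= Rabs K * (r / (Rabs K + 1)))
    by (apply Rmult_le_compat_l; [apply Rabs_pos|lra]).
  assert (Rabs K * (r / (Rabs K + 1)) < r).
  { apply Rmult_lt_reg_r with (Rabs K + 1); [lra|].
    replace (Rabs K * (r / (Rabs K + 1)) * (Rabs K + 1)) with (Rabs K * r) by (field; lra).
    pose proof (Rabs_pos K). nra. }
  lra.
Qed.

Lemma inv_INR_S_pos (l : nat) : 0 < / INR (S l).
Proof. apply Rinv_0_lt_compat, lt_0_INR. lia. Qed.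

Lemma is_lim_seq_inv_succ : is_lim_seq (fun l => / INR (S l)) 0.
Proof.
  assert (H : is_lim_seq (fun l => INR (S l)) p_infty)
    by apply (is_lim_seq_incr_1 INR), is_lim_seq_INR.
  exact (is_lim_seq_inv _ _ H ltac:(discriminate)).
Qed.

Lemma is_lim_seq_0_of_sq_le (u v : nat -> R) :
  (forall N, u N ^ 2 <= v N) -> is_lim_seq v 0 -> is_lim_seq u 0.
Proof.
  intros H Hv. apply is_lim_seq_Reals. apply is_lim_seq_Reals in Hv. intros eps He.
  destruct (Hv (eps * eps)) as [N HN]; [nra|]. exists N. intros n Hn.
  specialize (HN n Hn). specialize (H n). unfold R_dist in *. rewrite Rminus_0_r in *.
  pose proof (Rle_abs (v n)). rewrite <- pow2_abs in H. pose proof (Rabs_pos (u n)). nra.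
Qed.

(** * The space l2 *)

Lemma sq_lin_le (a u v : R) : (a * u + v) ^ 2 <= 2 * a ^ 2 * u ^ 2 + 2 * v ^ 2.
Proof. pose proof (pow2_ge_0 (a * u - v)). nra. Qed.

Lemma l2_lin (a : R) (x y : nat -> R) : l2 x -> l2 y -> l2 (fun i => a * x i + y i).
Proof.
  intros Hx Hy. apply (ex_series_Rabs_le _ (fun i => 2 * a ^ 2 * x i ^ 2 + 2 * y i ^ 2)).
  - intro i. rewrite Rabs_right by (apply Rle_ge, pow2_ge_0). apply sq_lin_le.
  - apply ex_series_plus_R; now apply ex_series_scal_l_R.
Qed.

Lemma norm2_lin_le (a : R) (x y : nat -> R) : l2 x -> l2 y ->
  norm2 (fun i => a * x i + y i) <= 2 * a ^ 2 * norm2 x + 2 * norm2 y.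
Proof.
  intros Hx Hy. unfold norm2.
  rewrite <- (Series_scal_l (2 * a ^ 2)), <- Series_scal_l, <- Series_plus
    by (try apply ex_series_plus_R; now apply ex_series_scal_l_R).
  apply Series_le.
  - intro i. split; [apply pow2_ge_0|apply sq_lin_le].
  - apply ex_series_plus_R; now apply ex_series_scal_l_R.
Qed.

Lemma Rabs_mult_le_half_sq (x y : R) : Rabs (x * y) <= / 2 * (x ^ 2 + y ^ 2).
Proof.
  rewrite Rabs_mult, <- (pow2_abs x), <- (pow2_abs y).
  pose proof (pow2_ge_0 (Rabs x - Rabs y)). nra.
Qed.

Lemma ex_series_inner_abs (x y : nat -> R) : l2 x -> l2 y ->
  ex_series (fun i => Rabs (x i * y i)).
Proof.
  intros Hx Hy. apply (ex_series_Rabs_le _ (fun i => / 2 * (x i ^ 2 + y i ^ 2))).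
  - intro i. rewrite Rabs_Rabsolu. apply Rabs_mult_le_half_sq.
  - now apply ex_series_scal_l_R, ex_series_plus_R.
Qed.

Lemma ex_series_inner (x y : nat -> R) : l2 x -> l2 y -> ex_series (fun i => x i * y i).
Proof. intros. now apply ex_series_Rabs, ex_series_inner_abs. Qed.

Lemma inner_sym (x y : nat -> R) : inner x y = inner y x.
Proof. apply Series_ext. intro; ring. Qed.

Lemma norm2_inner (x : nat -> R) : norm2 x = inner x x.
Proof. apply Series_ext. intro; ring. Qed.

Lemma inner_lin_l (a : R) (x y z : nat -> R) : l2 x -> l2 y -> l2 z ->
  inner (fun i => a * x i + y i) z = a * inner x z + inner y z.
Proof.
  intros. unfold inner. rewrite <- Series_scal_l, <- Series_plus.
  - apply Series_ext. intro; ring.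
  - now apply ex_series_scal_l_R, ex_series_inner.
  - now apply ex_series_inner.
Qed.

Lemma inner_lin_r (a : R) (x y z : nat -> R) : l2 x -> l2 y -> l2 z ->
  inner z (fun i => a * x i + y i) = a * inner z x + inner z y.
Proof. intros. rewrite inner_sym, inner_lin_l, (inner_sym x), (inner_sym y); auto. Qed.

Lemma norm2_nonneg (x : nat -> R) : l2 x -> 0 <= norm2 x.
Proof. apply Series_nonneg. intro; apply pow2_ge_0. Qed.

Lemma coord_sq_le_norm2 (x : nat -> R) (i : nat) : l2 x -> x i ^ 2 <= norm2 x.
Proof. intro Hx. apply (term_le_Series (fun j => x j ^ 2)); [intro; apply pow2_ge_0|exact Hx]. Qed.

Lemma inner_abs_le (x y : nat -> R) : l2 x -> l2 y ->
  Rabs (inner x y) <= (norm2 x + norm2 y) / 2.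
Proof.
  intros Hx Hy. eapply Rle_trans; [now apply Series_Rabs, ex_series_inner_abs|].
  unfold norm2. replace ((Series (fun i => x i ^ 2) + Series (fun i => y i ^ 2)) / 2)
    with (Series (fun i => / 2 * (x i ^ 2 + y i ^ 2)))
    by (rewrite Series_scal_l, Series_plus; auto; field).
  apply Series_le.
  - intro i. split; [apply Rabs_pos|apply Rabs_mult_le_half_sq].
  - now apply ex_series_scal_l_R, ex_series_plus_R.
Qed.

Lemma inner_Cauchy_Schwarz (x y : nat -> R) : l2 x -> l2 y ->
  inner x y * inner x y <= norm2 x * norm2 y.
Proof.
  intros Hx Hy. apply discriminant_le. intro t.
  assert (Hl : l2 (fun i => (- t) * y i + x i)) by now apply l2_lin.
  pose proof (norm2_nonneg _ Hl) as H.
  rewrite norm2_inner, inner_lin_l, !inner_lin_r, (inner_sym y x) in H; auto.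
  rewrite !norm2_inner. nra.
Qed.

Lemma Series_abs_Cauchy_Schwarz (x y : nat -> R) : l2 x -> l2 y ->
  Series (fun i => Rabs (x i * y i)) * Series (fun i => Rabs (x i * y i)) <= norm2 x * norm2 y.
Proof.
  intros Hx Hy.
  assert (Habs : forall z, l2 z -> l2 (fun i => Rabs (z i)))
    by (intros z; apply ex_series_ext; intro; now rewrite pow2_abs).
  assert (Hnorm : forall z, norm2 (fun i => Rabs (z i)) = norm2 z)
    by (intro z; apply Series_ext; intro; now rewrite pow2_abs).
  rewrite <- (Hnorm x), <- (Hnorm y).
  replace (Series (fun i => Rabs (x i * y i))) with (inner (fun i => Rabs (x i)) (fun i => Rabs (y i)))
    by (apply Series_ext; intro; now rewrite Rabs_mult).
  apply inner_Cauchy_Schwarz; auto.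
Qed.

Lemma unitv_neq (j i : nat) : i <> j -> unitv j i = 0.
Proof. intro H. unfold unitv. now rewrite (proj2 (Nat.eqb_neq i j) H). Qed.

Lemma unitv_eq (j : nat) : unitv j j = 1.
Proof. unfold unitv. now rewrite Nat.eqb_refl. Qed.

Lemma inner_unitv (y : nat -> R) (j : nat) : inner y (unitv j) = y j.
Proof.
  assert (H : forall i, i <> j -> y i * unitv j i = 0)
    by (intros i Hi; rewrite unitv_neq by assumption; ring).
  unfold inner. rewrite (is_series_unique _ _ (is_series_single _ j H)), unitv_eq. ring.
Qed.

Lemma l2_unitv (j : nat) : l2 (unitv j).
Proof.
  exists (unitv j j ^ 2). apply (is_series_single (fun i => unitv j i ^ 2)).
  intros i Hi. rewrite unitv_neq by assumption. ring.
Qed.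

(** * The direct sum H~ of countably many copies of l2 *)

Definition innerH (y z : nat -> nat -> R) : R := Series (fun n => inner (y n) (z n)).

Lemma fun2_ext (f g : nat -> nat -> R) : (forall n m, f n m = g n m) -> f = g.
Proof. intro H. do 2 (apply functional_extensionality; intro). apply H. Qed.

Lemma Htilde_ext (y z : nat -> nat -> R) :
  (forall n m, y n m = z n m) -> in_Htilde y -> in_Htilde z.
Proof. intro H. now rewrite (fun2_ext _ _ H). Qed.

Lemma l2_zero : l2 (fun _ => 0).
Proof. exists (0 ^ 2). apply (is_series_single (fun _ => 0 ^ 2) 0). intros; simpl; ring. Qed.

Lemma norm2_zero : norm2 (fun _ => 0) = 0.
Proof.
  apply Series_eq0. intro; simpl; ring.
Qed.

Lemma Htilde_zero : in_Htilde (fun _ _ => 0).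
Proof.
  split; [intro; apply l2_zero|].
  apply (ex_series_ext_R (fun _ => 0)); [intro; symmetry; apply norm2_zero|].
  exists 0. apply (is_series_single (fun _ => 0) 0). reflexivity.
Qed.

Lemma Htilde_lin (a : R) (y z : nat -> nat -> R) :
  in_Htilde y -> in_Htilde z -> in_Htilde (fun n m => a * y n m + z n m).
Proof.
  intros [Hy1 Hy2] [Hz1 Hz2]. split; [intro n; now apply l2_lin|].
  apply (ex_series_Rabs_le _ (fun n => 2 * a ^ 2 * norm2 (y n) + 2 * norm2 (z n))).
  - intro n. rewrite Rabs_right by now apply Rle_ge, norm2_nonneg, l2_lin.
    now apply norm2_lin_le.
  - apply ex_series_plus_R; now apply ex_series_scal_l_R.
Qed.

Lemma Htilde_sub (y z : nat -> nat -> R) :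
  in_Htilde y -> in_Htilde z -> in_Htilde (fun n m => y n m - z n m).
Proof.
  intros. apply (Htilde_ext (fun n m => (-1) * z n m + y n m)); [intros; ring|now apply Htilde_lin].
Qed.

Lemma ex_series_innerH (y z : nat -> nat -> R) : in_Htilde y -> in_Htilde z ->
  ex_series (fun n => inner (y n) (z n)).
Proof.
  intros [Hy1 Hy2] [Hz1 Hz2]. apply ex_series_Rabs.
  apply (ex_series_Rabs_le _ (fun n => / 2 * (norm2 (y n) + norm2 (z n)))).
  - intro n. rewrite Rabs_Rabsolu, Rmult_comm. now apply inner_abs_le.
  - now apply ex_series_scal_l_R, ex_series_plus_R.
Qed.

Lemma innerH_sym (y z : nat -> nat -> R) : innerH y z = innerH z y.
Proof. apply Series_ext. intro; apply inner_sym. Qed.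

Lemma normH2_innerH (y : nat -> nat -> R) : normH2 y = innerH y y.
Proof. apply Series_ext. intro; apply norm2_inner. Qed.

Lemma innerH_lin_l (a : R) (x y z : nat -> nat -> R) :
  in_Htilde x -> in_Htilde y -> in_Htilde z ->
  innerH (fun n m => a * x n m + y n m) z = a * innerH x z + innerH y z.
Proof.
  intros Hx Hy Hz. unfold innerH. rewrite <- Series_scal_l, <- Series_plus.
  - apply Series_ext. intro n. apply inner_lin_l; [apply Hx|apply Hy|apply Hz].
  - now apply ex_series_scal_l_R, ex_series_innerH.
  - now apply ex_series_innerH.
Qed.

Lemma innerH_lin_r (a : R) (x y z : nat -> nat -> R) :
  in_Htilde x -> in_Htilde y -> in_Htilde z ->
  innerH z (fun n m => a * x n m + y n m) = a * innerH z x + innerH z y.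
Proof. intros. rewrite innerH_sym, innerH_lin_l, (innerH_sym x), (innerH_sym y); auto. Qed.

Lemma innerH_zero_r (z : nat -> nat -> R) : innerH z (fun _ _ => 0) = 0.
Proof.
  apply Series_eq0. intro n. apply Series_eq0. intro; ring.
Qed.

Lemma normH2_nonneg (y : nat -> nat -> R) : in_Htilde y -> 0 <= normH2 y.
Proof. intros [H1 H2]. apply Series_nonneg; [intro; now apply norm2_nonneg|exact H2]. Qed.

Lemma normH2_expand (u v : nat -> nat -> R) (t : R) : in_Htilde u -> in_Htilde v ->
  normH2 (fun n m => t * v n m + u n m) = normH2 u + 2 * t * innerH u v + t * t * normH2 v.
Proof.
  intros Hu Hv.
  rewrite normH2_innerH, innerH_lin_l, !innerH_lin_r, !normH2_innerH, (innerH_sym v u);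
    auto using Htilde_lin.
  ring.
Qed.

Lemma innerH_Cauchy_Schwarz (y z : nat -> nat -> R) : in_Htilde y -> in_Htilde z ->
  innerH y z * innerH y z <= normH2 y * normH2 z.
Proof.
  intros Hy Hz. apply discriminant_le. intro t.
  pose proof (normH2_nonneg _ (Htilde_lin (- t) z y Hz Hy)) as H.
  rewrite normH2_expand in H; auto. lra.
Qed.

Lemma normH2_scal (c : R) (y : nat -> nat -> R) : normH2 (fun n m => c * y n m) = c ^ 2 * normH2 y.
Proof.
  unfold normH2, norm2. rewrite <- Series_scal_l. apply Series_ext. intro n.
  rewrite <- Series_scal_l. apply Series_ext. intro m. ring.
Qed.

Lemma normH2_parallelogram (y z : nat -> nat -> R) : in_Htilde y -> in_Htilde z ->
  normH2 (fun n m => y n m - z n m) + normH2 (fun n m => y n m + z n m) =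
  2 * normH2 y + 2 * normH2 z.
Proof.
  intros Hy Hz.
  rewrite (fun2_ext (fun n m => y n m - z n m) (fun n m => (-1) * z n m + y n m)),
    (fun2_ext (fun n m => y n m + z n m) (fun n m => 1 * z n m + y n m)) by (intros; ring).
  rewrite !normH2_expand by assumption. ring.
Qed.

Lemma normH2_add_le (y z : nat -> nat -> R) : in_Htilde y -> in_Htilde z ->
  normH2 (fun n m => y n m + z n m) <= 2 * normH2 y + 2 * normH2 z.
Proof.
  intros Hy Hz. pose proof (normH2_parallelogram y z Hy Hz).
  pose proof (normH2_nonneg _ (Htilde_sub y z Hy Hz)). lra.
Qed.

Lemma coord_sq_le_normH2 (y : nat -> nat -> R) (n m : nat) : in_Htilde y -> y n m ^ 2 <= normH2 y.
Proof.
  intros [H1 H2]. eapply Rle_trans; [now apply coord_sq_le_norm2|].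
  apply (term_le_Series (fun n => norm2 (y n))); [intro; now apply norm2_nonneg|exact H2].
Qed.

Lemma normH2_eq0_coord (y : nat -> nat -> R) (n m : nat) : in_Htilde y -> normH2 y = 0 -> y n m = 0.
Proof.
  intros Hy H0. pose proof (coord_sq_le_normH2 y n m Hy). pose proof (pow2_ge_0 (y n m)).
  nra.
Qed.

Lemma tilde_Htilde (x : nat -> R) : l2 x -> in_Htilde (tilde x).
Proof.
  intro Hx. unfold tilde.
  assert (Hsq : forall n, (fun m => (x n * x (n + m)%nat) ^ 2) = (fun m => x n ^ 2 * x (n + m)%nat ^ 2))
    by (intro n; apply functional_extensionality; intro; ring).
  assert (Hrow : forall n, l2 (fun m => x n * x (n + m)%nat)).
  { intro n. unfold l2. rewrite Hsq.
    now apply ex_series_scal_l_R, (ex_series_incr_n (fun i => x i ^ 2) n). }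
  split; [exact Hrow|].
  apply (ex_series_Rabs_le _ (fun n => norm2 x * x n ^ 2)); [|now apply ex_series_scal_l_R].
  intro n. rewrite Rabs_right by now apply Rle_ge, norm2_nonneg.
  unfold norm2 at 1. rewrite Hsq, Series_scal_l, Rmult_comm.
  apply Rmult_le_compat_r; [apply pow2_ge_0|].
  apply (Series_shift_le (fun i => x i ^ 2)); [intro; apply pow2_ge_0|exact Hx].
Qed.

Lemma normH2_partial_sums_le (y : nat -> nat -> R) (A B : nat) : in_Htilde y ->
  sum_f_R0 (fun n => sum_f_R0 (fun m => y n m ^ 2) B) A <= normH2 y.
Proof.
  intros [H1 H2]. apply Rle_trans with (sum_f_R0 (fun n => norm2 (y n)) A).
  - apply sum_Rle. intros n _. apply (sum_le_Series (fun m => y n m ^ 2)); [intro; apply pow2_ge_0|apply H1].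
  - apply (sum_le_Series (fun n => norm2 (y n))); [intro; now apply norm2_nonneg|exact H2].
Qed.

Lemma Htilde_of_bounded_partial_sums (y : nat -> nat -> R) (M : R) :
  (forall A B, sum_f_R0 (fun n => sum_f_R0 (fun m => y n m ^ 2) B) A <= M) ->
  in_Htilde y /\ normH2 y <= M.
Proof.
  intro H.
  assert (Hrow : forall n, l2 (y n) /\ norm2 (y n) <= M).
  { intro n. apply ex_series_bounded_partial_sums; [intro; apply pow2_ge_0|]. intro B.
    eapply Rle_trans; [|apply (H n B)].
    apply (term_le_sum_f_R0 (fun n => sum_f_R0 (fun m => y n m ^ 2) B)).
    intro; apply cond_pos_sum; intro; apply pow2_ge_0. }
  assert (Hsum : forall A, sum_f_R0 (fun n => norm2 (y n)) A <= M).
  { intro A. refine (is_lim_seq_le _ (fun _ => M) (sum_f_R0 (fun n => norm2 (y n)) A) M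
                      (fun B => H A B) _ (is_lim_seq_const M)).
    apply (sum_f_R0_lim (fun B n => sum_f_R0 (fun m => y n m ^ 2) B) (fun n => norm2 (y n))).
    intro n. apply Series_partial_sums, Hrow. }
  destruct (ex_series_bounded_partial_sums (fun n => norm2 (y n)) (fun n => norm2_nonneg _ (proj1 (Hrow n))) M Hsum).
  repeat split; auto. intro n; apply Hrow.
Qed.

Lemma Htilde_complete (w : nat -> nat -> nat -> R) (e : nat -> R) :
  (forall l, in_Htilde (w l)) -> is_lim_seq e 0 ->
  (forall l k, normH2 (fun n m => w l n m - w k n m) <= e l + e k) ->
  exists p, forall l,
    in_Htilde (fun n m => p n m - w l n m) /\ normH2 (fun n m => p n m - w l n m) <= e l.
Proof.
  intros Hw He Hcau.
  assert (Hcoord : forall n m, ex_finite_lim_seq (fun l => w l n m)).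
  { intros n m. apply ex_lim_seq_cauchy_corr. intro eps.
    apply is_lim_seq_Reals in He. destruct (He (eps * eps / 2)) as [N HN].
    { pose proof (cond_pos eps). apply Rdiv_lt_0_compat; nra. }
    exists N. intros l k Hl Hk.
    specialize (HN l Hl) as Hel. specialize (HN k Hk) as Hek. unfold R_dist in Hel, Hek.
    rewrite Rminus_0_r in Hel, Hek. pose proof (Rle_abs (e l)). pose proof (Rle_abs (e k)).
    pose proof (coord_sq_le_normH2 _ n m (Htilde_sub _ _ (Hw l) (Hw k))) as Hsq.
    specialize (Hcau l k). cbv beta in Hsq. rewrite <- pow2_abs in Hsq.
    pose proof (cond_pos eps). pose proof (Rabs_pos (w l n m - w k n m)). nra. }
  set (p := fun n m => real (Lim_seq (fun l => w l n m))).
  assert (Hp : forall n m, is_lim_seq (fun l => w l n m) (p n m)).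
  { intros n m. destruct (Hcoord n m) as [L HL]. unfold p. now rewrite (is_lim_seq_unique _ _ HL). }
  exists p. intro l. apply Htilde_of_bounded_partial_sums. intros A B.
  assert (Hlim : is_lim_seq (fun k => sum_f_R0 (fun n => sum_f_R0 (fun m => (w k n m - w l n m) ^ 2) B) A)
                            (sum_f_R0 (fun n => sum_f_R0 (fun m => (p n m - w l n m) ^ 2) B) A)).
  { apply (sum_f_R0_lim (fun k n => sum_f_R0 (fun m => (w k n m - w l n m) ^ 2) B)). intro n.
    apply (sum_f_R0_lim (fun k m => (w k n m - w l n m) ^ 2)). intro m.
    apply (is_lim_seq_ext (fun k => (w k n m - w l n m) * ((w k n m - w l n m) * 1))); [reflexivity|].
    apply is_lim_seq_mult'; [|apply is_lim_seq_mult'; [|apply is_lim_seq_const]];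
      apply is_lim_seq_minus'; auto; apply is_lim_seq_const. }
  assert (Hbound : is_lim_seq (fun k => e k + e l) (e l)).
  { replace (Finite (e l)) with (Rbar_plus 0 (e l)) by (simpl; f_equal; ring).
    apply is_lim_seq_plus'; [exact He|apply is_lim_seq_const]. }
  refine (is_lim_seq_le _ _ _ _ _ Hlim Hbound). intro k. eapply Rle_trans; [|apply Hcau].
  apply (normH2_partial_sums_le (fun n m => w k n m - w l n m)). now apply Htilde_sub.
Qed.

Lemma innerH_sq_le_of_almost_minimal (u v : nat -> nat -> R) (d delta : R) :
  in_Htilde u -> in_Htilde v ->
  (forall t, d <= normH2 (fun n m => t * v n m + u n m)) -> normH2 u <= d + delta ->
  innerH u v * innerH u v <= delta * normH2 v.
Proof.
  intros Hu Hv Hmin Hu_d. apply discriminant_le. intro t.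
  specialize (Hmin (- t)). rewrite normH2_expand in Hmin by assumption. lra.
Qed.

(** * Best approximation in H~ *)

Section Projection.

Variable V : (nat -> nat -> R) -> Prop.
Hypothesis V_Htilde : forall v, V v -> in_Htilde v.
Hypothesis V_zero : V (fun _ _ => 0).
Hypothesis V_lin : forall a u v, V u -> V v -> V (fun n m => a * u n m + v n m).

Variable y : nat -> nat -> R.
Hypothesis y_Htilde : in_Htilde y.

Let dist2 (v : nat -> nat -> R) : R := normH2 (fun n m => y n m - v n m).

Lemma exists_minimizing_sequence : exists (d : R) (w : nat -> nat -> nat -> R),
  (forall v, V v -> d <= dist2 v) /\ forall l, V (w l) /\ dist2 (w l) < d + / INR (S l).
Proof.
  set (E := fun r => exists v, V v /\ r = - dist2 v).
  assert (Hub : bound E).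
  { exists 0. intros r [v [Hv ->]]. apply Ropp_le_cancel. rewrite Ropp_0, Ropp_involutive.
    apply normH2_nonneg, Htilde_sub; auto. }
  destruct (completeness E Hub (ex_intro _ _ (ex_intro _ _ (conj V_zero eq_refl)))) as [s [Hs Hleast]].
  exists (- s).
  assert (Hlow : forall v, V v -> - s <= dist2 v).
  { intros v Hv. assert (E (- dist2 v)) as Hv' by (exists v; auto). specialize (Hs _ Hv'). lra. }
  assert (Hnear : forall l, exists v, V v /\ dist2 v < - s + / INR (S l)).
  { intro l. apply NNPP. intro Hno.
    assert (s <= s - / INR (S l)); [|pose proof (inv_INR_S_pos l); lra].
    apply Hleast. intros r [v [Hv ->]].
    destruct (Rlt_le_dec (dist2 v) (- s + / INR (S l))); [exfalso; eauto|lra]. }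
  destruct (choice _ Hnear) as [w Hw]. now exists w.
Qed.

Lemma minimizing_sequence_cauchy (d : R) (w : nat -> nat -> nat -> R) :
  (forall v, V v -> d <= dist2 v) -> (forall l, V (w l) /\ dist2 (w l) < d + / INR (S l)) ->
  forall l k, normH2 (fun n m => w l n m - w k n m) <= 2 * / INR (S l) + 2 * / INR (S k).
Proof.
  intros Hlow Hw l k.
  assert (Hres : forall j, in_Htilde (fun n m => y n m - w j n m))
    by (intro j; apply Htilde_sub; [|apply V_Htilde, Hw]; assumption).
  pose proof (normH2_parallelogram _ _ (Hres k) (Hres l)) as P.
  set (mid := fun n m => / 2 * w l n m + (/ 2 * w k n m + 0)).
  assert (Hmid : V mid) by (apply V_lin, V_lin; apply Hw || apply V_zero).
  rewrite (fun2_ext _ (fun n m => w l n m - w k n m)) in P by (intros; ring).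
  rewrite (fun2_ext (fun n m => (y n m - w k n m) + (y n m - w l n m))
                    (fun n m => 2 * (y n m - mid n m))), normH2_scal in P
    by (intros; unfold mid; field).
  pose proof (Hlow mid Hmid). destruct (Hw l), (Hw k). unfold dist2 in *. simpl in P. lra.
Qed.

(** The residual [y - p], where [p] is the limit of a minimizing sequence, is
    orthogonal to [V]. *)
Theorem Htilde_exists_orthogonal (eps : R) : 0 < eps ->
  (forall v, V v -> eps <= dist2 v) ->
  exists z, in_Htilde z /\ 0 < normH2 z /\ forall v, V v -> innerH z v = 0.
Proof.
  intros Heps Hfar.
  destruct exists_minimizing_sequence as [d [w [Hlow Hw]]].
  assert (HwH : forall l, in_Htilde (w l)) by (intro l; apply V_Htilde, Hw).
  assert (Hres : forall l, in_Htilde (fun n m => y n m - w l n m)) by (intro; now apply Htilde_sub).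
  destruct (Htilde_complete w (fun l => 2 * / INR (S l)) HwH) as [p Hp].
  { replace (Finite 0) with (Rbar_mult 2 0) by (simpl; f_equal; ring).
    apply is_lim_seq_scal_l, is_lim_seq_inv_succ. }
  { now apply (minimizing_sequence_cauchy d). }
  set (z := fun n m => y n m - p n m).
  assert (Hz_split : forall l, z = fun n m => (-1) * (p n m - w l n m) + (y n m - w l n m))
    by (intro l; apply fun2_ext; intros; unfold z; ring).
  assert (Hz : in_Htilde z) by (rewrite (Hz_split 0%nat); apply Htilde_lin; [apply Hp|apply Hres]).
  exists z. split; [|split].
  - exact Hz.
  - destruct (Rle_lt_or_eq_dec 0 (normH2 z) (normH2_nonneg z Hz)) as [|Hz0]; [assumption|exfalso].
    assert (eps <= 0); [|lra]. apply (le_0_of_le_div_INR _ 4). intro l.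
    destruct (Hp l) as [Hpl Hpl_le]. eapply Rle_trans; [apply (Hfar _ (proj1 (Hw l)))|].
    unfold dist2. rewrite (fun2_ext _ (fun n m => z n m + (p n m - w l n m))) by (intros; unfold z; ring).
    eapply Rle_trans; [now apply normH2_add_le|]. rewrite <- Hz0. unfold Rdiv. lra.
  - intros v Hv. pose proof (V_Htilde v Hv) as HvH.
    assert (innerH z v * innerH z v <= 0); [|nra].
    apply (le_0_of_le_div_INR _ (6 * normH2 v)). intro l. destruct (Hp l) as [Hpl Hpl_le].
    set (a := innerH (fun n m => y n m - w l n m) v).
    set (b := innerH (fun n m => p n m - w l n m) v).
    assert (Hab : innerH z v = - b + a)
      by (rewrite (Hz_split l), innerH_lin_l by auto; unfold a, b; ring).
    assert (Ha : a * a <= / INR (S l) * normH2 v).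
    { apply (innerH_sq_le_of_almost_minimal _ _ d); auto; [|left; apply Hw].
      intro t. rewrite (fun2_ext _ (fun n m => y n m - ((- t) * v n m + w l n m))) by (intros; ring).
      apply Hlow, V_lin; [exact Hv|apply Hw]. }
    assert (Hb : b * b <= 2 * / INR (S l) * normH2 v).
    { eapply Rle_trans; [now apply innerH_Cauchy_Schwarz|].
      apply Rmult_le_compat_r; [now apply normH2_nonneg|exact Hpl_le]. }
    rewrite Hab. unfold Rdiv. pose proof (pow2_ge_0 (a + b)). nra.
Qed.

End Projection.

(** * Hilbert-Schmidt operators and their matrices *)

Definition trunc (N : nat) (x : nat -> R) : nat -> R := fun i => if (i <=? N)%nat then x i else 0.

Lemma trunc_0 (x : nat -> R) : trunc 0 x = (fun i => x 0%nat * unitv 0 i + 0).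
Proof.
  apply functional_extensionality. intros [|i]; unfold trunc, unitv; simpl; ring.
Qed.

Lemma trunc_S (N : nat) (x : nat -> R) :
  trunc (S N) x = (fun i => x (S N) * unitv (S N) i + trunc N x i).
Proof.
  apply functional_extensionality. intro i. unfold trunc, unitv.
  destruct (Nat.eq_dec i (S N)) as [->|Hi].
  - rewrite Nat.leb_refl, Nat.eqb_refl, (proj2 (Nat.leb_gt (S N) N)) by lia. ring.
  - rewrite (proj2 (Nat.eqb_neq i (S N)) Hi).
    destruct (Nat.leb_spec i N), (Nat.leb_spec i (S N)); try lia; ring.
Qed.

Lemma l2_trunc (N : nat) (x : nat -> R) : l2 (trunc N x).
Proof.
  induction N as [|N IH].
  - rewrite trunc_0. apply l2_lin; [apply l2_unitv|apply l2_zero].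
  - rewrite trunc_S. apply l2_lin; [apply l2_unitv|exact IH].
Qed.

Lemma is_lim_seq_norm2_sub_trunc (x : nat -> R) : l2 x ->
  is_lim_seq (fun N => norm2 (fun i => -1 * trunc N x i + x i)) 0.
Proof.
  intro Hx.
  apply is_lim_seq_ext with (fun N => norm2 x - sum_f_R0 (fun i => x i ^ 2) N).
  - intro N. unfold norm2.
    rewrite (Series_incr_n_aux (fun i => (-1 * trunc N x i + x i) ^ 2) (S N)),
      (Series_incr_n (fun i => x i ^ 2) (S N)) by (lia || assumption ||
        (intros k Hk; unfold trunc; rewrite (proj2 (Nat.leb_le k N)) by lia; ring)).
    simpl pred. ring_simplify. apply Series_ext. intro k. unfold trunc.
    rewrite (proj2 (Nat.leb_gt (S N + k) N)) by lia. ring.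
  - replace 0 with (norm2 x - norm2 x) by ring.
    apply is_lim_seq_minus'; [apply is_lim_seq_const|now apply Series_partial_sums].
Qed.

Section HSSelfAdjoint.

Variable T : (nat -> R) -> (nat -> R).
Hypothesis HT : is_HS_selfadjoint T.

Lemma HS_T_zero : T (fun _ => 0) = (fun _ => 0).
Proof.
  destruct HT as [_ [Hlin _]].
  pose proof (Hlin 1 _ _ l2_zero l2_zero) as E. cbv beta in E.
  replace (fun _ : nat => 1 * 0 + 0) with (fun _ : nat => 0) in E
    by (apply functional_extensionality; intro; ring).
  apply functional_extensionality. intro i. apply (f_equal (fun f => f i)) in E. cbv beta in E. lra.
Qed.

Lemma HS_T_trunc (N : nat) (x : nat -> R) (i : nat) :
  T (trunc N x) i = sum_f_R0 (fun j => T (unitv j) i * x j) N.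
Proof.
  destruct HT as [_ [Hlin _]]. induction N as [|N IH].
  - rewrite trunc_0, Hlin, HS_T_zero by (apply l2_unitv || apply l2_zero). simpl. ring.
  - rewrite trunc_S, Hlin, IH by (apply l2_unitv || apply l2_trunc). simpl. ring.
Qed.

Lemma HS_T_is_series (x : nat -> R) (i : nat) : l2 x ->
  is_series (fun j => T (unitv j) i * x j) (T x i).
Proof.
  intro Hx. destruct HT as [Hl2 [Hlin [[C HC] _]]].
  set (r := fun N i => -1 * trunc N x i + x i).
  assert (Hr : forall N, l2 (r N)) by (intro; apply l2_lin; [apply l2_trunc|exact Hx]).
  assert (Hdec : forall N, T x i = T (trunc N x) i + T (r N) i).
  { intro N. replace x with (fun i => 1 * trunc N x i + r N i) at 1
      by (apply functional_extensionality; intro; unfold r; ring).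
    rewrite Hlin by (apply l2_trunc || apply Hr). ring. }
  (* [T] is bounded and the truncations of [x] converge to [x] in l2. *)
  assert (HTr : is_lim_seq (fun N => T (r N) i) 0).
  { apply (is_lim_seq_0_of_sq_le _ (fun N => C * norm2 (r N))).
    - intro N. eapply Rle_trans; [apply coord_sq_le_norm2, Hl2, Hr|apply HC, Hr].
    - replace (Finite 0) with (Rbar_mult C 0) by (simpl; f_equal; ring).
      now apply is_lim_seq_scal_l, is_lim_seq_norm2_sub_trunc. }
  apply is_series_partial_sums, is_lim_seq_ext with (fun N => T x i - T (r N) i).
  - intro N. rewrite (Hdec N), HS_T_trunc. ring.
  - replace (Finite (T x i)) with (Finite (T x i - 0)) by (f_equal; ring).
    apply is_lim_seq_minus'; [apply is_lim_seq_const|exact HTr].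
Qed.

Lemma HS_matrix_sym (i j : nat) : T (unitv j) i = T (unitv i) j.
Proof.
  destruct HT as [_ [_ [_ [_ Hsa]]]].
  rewrite <- (inner_unitv (T (unitv j)) i), Hsa, inner_sym, inner_unitv by apply l2_unitv.
  reflexivity.
Qed.

Lemma HS_T_coord (x : nat -> R) (i : nat) : l2 x -> T x i = inner (T (unitv i)) x.
Proof.
  intro Hx. rewrite <- (is_series_unique _ _ (HS_T_is_series x i Hx)).
  apply Series_ext. intro j. now rewrite HS_matrix_sym.
Qed.

End HSSelfAdjoint.

Definition mx_op (s : nat -> nat -> R) (x : nat -> R) : nat -> R := fun i => inner (s i) x.

Definition mx_to_Htilde (s : nat -> nat -> R) : nat -> nat -> R :=
  fun n m => fold_wt m * s n (n + m)%nat.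

Definition Htilde_to_mx (z : nat -> nat -> R) : nat -> nat -> R :=
  fun i j => if (i <=? j)%nat then z i (j - i)%nat / fold_wt (j - i)
             else z j (i - j)%nat / fold_wt (i - j).

Section HSMatrix.

Variable s : nat -> nat -> R.
Hypothesis s_row : forall i, l2 (s i).
Hypothesis s_HS : ex_series (fun i => norm2 (s i)).

Lemma ex_series_mx_abs (x y : nat -> R) : l2 x -> l2 y ->
  ex_series (fun i => Rabs (y i) * Series (fun j => Rabs (s i j * x j))).
Proof.
  intros Hx Hy.
  set (r := fun i => Series (fun j => Rabs (s i j * x j))).
  assert (Hr2 : forall i, r i * r i <= norm2 (s i) * norm2 x)
    by (intro; now apply Series_abs_Cauchy_Schwarz).
  assert (Hr0 : forall i, 0 <= r i)
    by (intro; apply Series_nonneg; [intro; apply Rabs_pos|now apply ex_series_inner_abs]).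
  apply (ex_series_Rabs_le _ (fun i => / 2 * (y i ^ 2 + norm2 x * norm2 (s i)))).
  - intro i. fold (r i). rewrite Rabs_right by (apply Rle_ge, Rmult_le_pos; auto; apply Rabs_pos).
    rewrite <- (pow2_abs (y i)). pose proof (Rabs_pos (y i)). pose proof (Hr2 i).
    pose proof (pow2_ge_0 (Rabs (y i) - r i)). nra.
  - now apply ex_series_scal_l_R, ex_series_plus_R, ex_series_scal_l_R.
Qed.

Lemma norm2_mx_op_le (x : nat -> R) : l2 x ->
  ex_series (fun i => mx_op s x i ^ 2) /\
  norm2 (mx_op s x) <= Series (fun i => norm2 (s i)) * norm2 x.
Proof.
  intro Hx.
  assert (Hle : forall i, mx_op s x i ^ 2 <= norm2 (s i) * norm2 x).
  { intro i. unfold mx_op. rewrite <- Rsqr_pow2. now apply inner_Cauchy_Schwarz. }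
  assert (Hex : ex_series (fun i => norm2 (s i) * norm2 x)) by now apply ex_series_scal_r.
  assert (Habs : forall i, Rabs (mx_op s x i ^ 2) <= norm2 (s i) * norm2 x)
    by (intro; rewrite Rabs_right by (apply Rle_ge, pow2_ge_0); apply Hle).
  split; [exact (ex_series_Rabs_le _ _ Habs Hex)|].
  unfold norm2 at 1. rewrite <- Series_scal_r. apply Series_le; [|exact Hex].
  intro i. split; [apply pow2_ge_0|apply Hle].
Qed.

Lemma mx_op_selfadjoint (x y : nat -> R) :
  (forall i j, s i j = s j i) -> l2 x -> l2 y -> inner (mx_op s x) y = inner x (mx_op s y).
Proof.
  intros s_sym Hx Hy. set (a := fun i j => s i j * x j * y i).
  assert (Hrow : forall i, ex_series (fun j => Rabs (a i j))).
  { intro i. apply (ex_series_ext_R (fun j => Rabs (y i) * Rabs (s i j * x j))).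
    - intro j. unfold a. rewrite !Rabs_mult. ring.
    - now apply ex_series_scal_l_R, ex_series_inner_abs. }
  assert (Hsum : ex_series (fun i => Series (fun j => Rabs (a i j)))).
  { apply (ex_series_ext_R (fun i => Rabs (y i) * Series (fun j => Rabs (s i j * x j)))).
    - intro i. rewrite <- Series_scal_l. apply Series_ext. intro j. unfold a. rewrite !Rabs_mult. ring.
    - now apply ex_series_mx_abs. }
  destruct (Series_swap a Hrow Hsum) as [_ [_ Hswap]].
  unfold mx_op. unfold inner at 1 3.
  rewrite (Series_ext (fun i => inner (s i) x * y i) (fun i => Series (fun j => a i j)))
    by (intro i; unfold inner; rewrite <- Series_scal_r; apply Series_ext; intro; unfold a; ring).
  rewrite <- Hswap. apply Series_ext. intro j. unfold inner. rewrite <- Series_scal_l.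
  apply Series_ext. intro i. unfold a. rewrite s_sym. ring.
Qed.

Lemma mx_op_HS_selfadjoint : (forall i j, s i j = s j i) -> is_HS_selfadjoint (mx_op s).
Proof.
  intro s_sym. split; [|split; [|split; [|split]]].
  - intros x Hx. apply norm2_mx_op_le, Hx.
  - intros a x y Hx Hy. apply functional_extensionality. intro i. now apply inner_lin_r.
  - exists (Series (fun i => norm2 (s i))). intros x Hx. apply norm2_mx_op_le, Hx.
  - apply (ex_series_ext_R (fun j => norm2 (s j))); [|exact s_HS].
    intro j. apply Series_ext. intro i. unfold mx_op. now rewrite inner_unitv, s_sym.
  - intros x y Hx Hy. now apply mx_op_selfadjoint.
Qed.

Lemma inner_mx_op_tilde (x : nat -> R) : (forall i j, s i j = s j i) -> l2 x ->
  inner (mx_op s x) x = innerH (mx_to_Htilde s) (tilde x).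
Proof.
  intros s_sym Hx. set (b := fun i j => s i j * x j * x i).
  assert (Hrow : forall i, ex_series (fun j => Rabs (b i j))).
  { intro i. apply (ex_series_ext_R (fun j => Rabs (x i) * Rabs (s i j * x j))).
    - intro j. unfold b. rewrite !Rabs_mult. ring.
    - now apply ex_series_scal_l_R, ex_series_inner_abs. }
  assert (Hsum : ex_series (fun i => Series (fun j => Rabs (b i j)))).
  { apply (ex_series_ext_R (fun i => Rabs (x i) * Series (fun j => Rabs (s i j * x j)))).
    - intro i. rewrite <- Series_scal_l. apply Series_ext. intro j. unfold b. rewrite !Rabs_mult. ring.
    - now apply ex_series_mx_abs. }
  assert (Hsym : forall i j, b i j = b j i) by (intros; unfold b; rewrite s_sym; ring).
  pose proof (Series_symmetric_fold b Hsym Hrow Hsum) as Hfold.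
  unfold inner at 1, mx_op.
  rewrite (Series_ext _ (fun i => Series (b i)))
    by (intro i; unfold inner; rewrite <- Series_scal_r; reflexivity).
  rewrite Hfold. apply Series_ext. intro n. apply Series_ext. intro m.
  unfold b, mx_to_Htilde, tilde. ring.
Qed.

Lemma Htilde_mx_to_Htilde : in_Htilde (mx_to_Htilde s).
Proof.
  assert (Hle : forall n m, mx_to_Htilde s n m ^ 2 <= 4 * s n (n + m)%nat ^ 2).
  { intros n m. unfold mx_to_Htilde. pose proof (fold_wt_bounds m).
    pose proof (pow2_ge_0 (s n (n + m)%nat)). rewrite Rpow_mult_distr.
    apply Rmult_le_compat_r; [assumption|simpl; nra]. }
  assert (Hshift : forall n, ex_series (fun m => 4 * s n (n + m)%nat ^ 2))
    by (intro n; apply ex_series_scal_l_R, (ex_series_incr_n (fun j => s n j ^ 2) n), s_row).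
  assert (Hrow : forall n, l2 (mx_to_Htilde s n)).
  { intro n. apply (ex_series_nonneg_le _ _ (fun m => conj (pow2_ge_0 _) (Hle n m)) (Hshift n)). }
  split; [exact Hrow|].
  apply (ex_series_nonneg_le _ (fun n => 4 * norm2 (s n))); [|now apply ex_series_scal_l_R].
  intro n. split; [now apply norm2_nonneg|].
  apply Rle_trans with (Series (fun m => 4 * s n (n + m)%nat ^ 2)).
  - apply Series_le; [intro m; split; [apply pow2_ge_0|apply Hle]|apply Hshift].
  - rewrite Series_scal_l. apply Rmult_le_compat_l; [lra|].
    apply (Series_shift_le (fun j => s n j ^ 2)); [intro; apply pow2_ge_0|apply s_row].
Qed.

End HSMatrix.

Lemma mx_eq0_of_mx_to_Htilde_eq0 (s : nat -> nat -> R) :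
  (forall i j, s i j = s j i) -> (forall n m, mx_to_Htilde s n m = 0) -> forall i j, s i j = 0.
Proof.
  intros s_sym H0.
  assert (Hup : forall i m, s i (i + m)%nat = 0).
  { intros i m. specialize (H0 i m). unfold mx_to_Htilde in H0. pose proof (fold_wt_bounds m). nra. }
  intros i j. destruct (Nat.le_gt_cases i j).
  - replace j with (i + (j - i))%nat by lia. apply Hup.
  - rewrite s_sym. replace i with (j + (i - j))%nat by lia. apply Hup.
Qed.

Lemma Htilde_to_mx_sym (z : nat -> nat -> R) (i j : nat) : Htilde_to_mx z i j = Htilde_to_mx z j i.
Proof.
  unfold Htilde_to_mx.
  destruct (Nat.leb_spec i j), (Nat.leb_spec j i); try lia; try reflexivity.
  now replace j with i by lia.
Qed.

Lemma mx_to_Htilde_to_mx (z : nat -> nat -> R) : mx_to_Htilde (Htilde_to_mx z) = z.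
Proof.
  apply fun2_ext. intros n m. unfold mx_to_Htilde, Htilde_to_mx.
  rewrite (proj2 (Nat.leb_le n (n + m))) by lia. replace (n + m - n)%nat with m by lia.
  pose proof (fold_wt_bounds m). field. lra.
Qed.

Lemma sq_div_fold_wt_le (a : R) (m : nat) : (a / fold_wt m) ^ 2 <= a ^ 2.
Proof.
  pose proof (fold_wt_bounds m). unfold Rdiv. rewrite Rpow_mult_distr.
  assert (0 < / fold_wt m <= 1).
  { split; [apply Rinv_0_lt_compat; lra|]. rewrite <- Rinv_1. apply Rinv_le_contravar; lra. }
  assert ((/ fold_wt m) ^ 2 <= 1) by (simpl; nra).
  rewrite <- (Rmult_1_r (a ^ 2)) at 2. apply Rmult_le_compat_l; [apply pow2_ge_0|assumption].
Qed.

Section HtildeToMx.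

Variable z : nat -> nat -> R.
Hypothesis z_Htilde : in_Htilde z.

Let U (i j : nat) : R := if (i <=? j)%nat then z i (j - i)%nat ^ 2 else 0.

Let U_nonneg (i j : nat) : 0 <= U i j.
Proof. unfold U. destruct (i <=? j)%nat; [apply pow2_ge_0|lra]. Qed.

Let Htilde_to_mx_sq_le (i j : nat) : Htilde_to_mx z i j ^ 2 <= U i j + U j i.
Proof.
  pose proof (U_nonneg i j). pose proof (U_nonneg j i).
  unfold Htilde_to_mx, U in *. destruct (Nat.leb_spec i j).
  - pose proof (sq_div_fold_wt_le (z i (j - i)%nat) (j - i)). lra.
  - rewrite (proj2 (Nat.leb_le j i)) in * by lia.
    pose proof (sq_div_fold_wt_le (z j (i - j)%nat) (i - j)). lra.
Qed.

Let U_row (i : nat) : ex_series (U i) /\ Series (U i) = norm2 (z i).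
Proof.
  assert (Hsh : forall k, U i (i + k)%nat = z i k ^ 2).
  { intro k. unfold U. rewrite (proj2 (Nat.leb_le i (i + k))) by lia. do 2 f_equal. lia. }
  assert (Hlow : forall k, (k < i)%nat -> U i k = 0)
    by (intros k Hk; unfold U; now rewrite (proj2 (Nat.leb_gt i k))).
  split.
  - apply (ex_series_incr_n (U i) i), (ex_series_ext_R (fun k => z i k ^ 2)); [|apply z_Htilde].
    intro; now rewrite Hsh.
  - rewrite (Series_incr_n_aux (U i) i Hlow). apply Series_ext. intro. apply Hsh.
Qed.

Let U_cols : (forall j, ex_series (fun i => U i j)) /\ ex_series (fun j => Series (fun i => U i j)).
Proof.
  assert (Habs : forall i j, Rabs (U i j) = U i j) by (intros; apply Rabs_right, Rle_ge, U_nonneg).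
  assert (HU_abs : forall i, ex_series (fun j => Rabs (U i j)))
    by (intro i; apply (ex_series_ext_R (U i)); [intro; now rewrite Habs|apply U_row]).
  assert (HU_sum : ex_series (fun i => Series (fun j => Rabs (U i j)))).
  { apply (ex_series_ext_R (fun i => norm2 (z i))); [|apply z_Htilde]. intro i.
    rewrite <- (proj2 (U_row i)). apply Series_ext. intro j. symmetry. apply Habs. }
  destruct (Series_swap U HU_abs HU_sum) as [HU_col [HU_cols _]]. now split.
Qed.

Lemma Htilde_to_mx_HS :
  (forall i, l2 (Htilde_to_mx z i)) /\ ex_series (fun i => norm2 (Htilde_to_mx z i)).
Proof.
  destruct U_cols as [HU_col HU_cols].
  assert (Hdom : forall i, ex_series (fun j => U i j + U j i))
    by (intro i; apply ex_series_plus_R; [apply U_row|apply HU_col]).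
  assert (Hrow : forall i, l2 (Htilde_to_mx z i)).
  { intro i. apply (ex_series_nonneg_le _ _ (fun j => conj (pow2_ge_0 _) (Htilde_to_mx_sq_le i j))).
    apply Hdom. }
  split; [exact Hrow|].
  apply (ex_series_nonneg_le _ (fun i => Series (U i) + Series (fun j => U j i))).
  - intro i. split; [now apply norm2_nonneg|]. rewrite <- Series_plus by (apply U_row || apply HU_col).
    apply Series_le; [intro j; split; [apply pow2_ge_0|apply Htilde_to_mx_sq_le]|apply Hdom].
  - apply ex_series_plus_R; [|exact HU_cols].
    apply (ex_series_ext_R (fun i => norm2 (z i))); [|apply z_Htilde]. intro i. symmetry. apply U_row.
Qed.

End HtildeToMx.

(** * The span of the family [x~_k] *)

Definition span_tilde (X : nat -> nat -> R) (v : nat -> nat -> R) : Prop :=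
  exists N c, v = lincomb X c N.

Section SpanTilde.

Variable X : nat -> nat -> R.
Hypothesis X_l2 : forall k, l2 (X k).

Lemma Htilde_lincomb (c : nat -> R) (N : nat) : in_Htilde (lincomb X c N).
Proof.
  induction N as [|N IH]; [apply Htilde_zero|]. simpl.
  apply (Htilde_ext (fun n m => c N * tilde (X N) n m + lincomb X c N n m)); [intros; ring|].
  apply Htilde_lin; [now apply tilde_Htilde|exact IH].
Qed.

Lemma lincomb_ext (c c' : nat -> R) (N : nat) :
  (forall k, (k < N)%nat -> c k = c' k) -> lincomb X c N = lincomb X c' N.
Proof.
  intro H. induction N as [|N IH]; [reflexivity|]. simpl.
  rewrite IH, (H N) by (lia || (intros; apply H; lia)). reflexivity.
Qed.

Lemma lincomb_pad (c : nat -> R) (N M : nat) :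
  lincomb X (fun k => if (k <? N)%nat then c k else 0) (N + M) = lincomb X c N.
Proof.
  induction M as [|M IH].
  - rewrite Nat.add_0_r. apply lincomb_ext. intros k Hk. now rewrite (proj2 (Nat.ltb_lt k N) Hk).
  - rewrite Nat.add_succ_r. simpl. rewrite IH, (proj2 (Nat.ltb_ge (N + M) N)) by lia.
    apply fun2_ext. intros; ring.
Qed.

Lemma lincomb_lin (a : R) (c d : nat -> R) (N : nat) :
  lincomb X (fun k => a * c k + d k) N = (fun n m => a * lincomb X c N n m + lincomb X d N n m).
Proof.
  induction N as [|N IH]; simpl; [|rewrite IH]; apply fun2_ext; intros; ring.
Qed.

Lemma span_tilde_lin (a : R) (u v : nat -> nat -> R) :
  span_tilde X u -> span_tilde X v -> span_tilde X (fun n m => a * u n m + v n m).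
Proof.
  intros [N1 [c1 ->]] [N2 [c2 ->]].
  exists (N1 + N2)%nat,
    (fun k => a * (if (k <? N1)%nat then c1 k else 0) + (if (k <? N2)%nat then c2 k else 0)).
  rewrite lincomb_lin, lincomb_pad, Nat.add_comm, lincomb_pad. reflexivity.
Qed.

Lemma span_tilde_zero : span_tilde X (fun _ _ => 0).
Proof. now exists 0%nat, (fun _ => 0). Qed.

Lemma span_tilde_tilde (k : nat) : span_tilde X (tilde (X k)).
Proof.
  exists (S k), (fun j => if (j =? k)%nat then 1 else 0). simpl.
  rewrite Nat.eqb_refl, (lincomb_ext _ (fun _ => 0)).
  - assert (H0 : forall N, lincomb X (fun _ => 0) N = (fun _ _ => 0)).
    { induction N as [|N IH]; [reflexivity|]. simpl. rewrite IH. apply fun2_ext. intros; ring. }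
    rewrite H0. apply fun2_ext. intros; ring.
  - intros j Hj. now rewrite (proj2 (Nat.eqb_neq j k)) by lia.
Qed.

Lemma Htilde_span_tilde (v : nat -> nat -> R) : span_tilde X v -> in_Htilde v.
Proof. intros [N [c ->]]. apply Htilde_lincomb. Qed.

Lemma innerH_lincomb_eq0 (z : nat -> nat -> R) (c : nat -> R) (N : nat) : in_Htilde z ->
  (forall k, innerH z (tilde (X k)) = 0) -> innerH z (lincomb X c N) = 0.
Proof.
  intros Hz Horth. induction N as [|N IH]; [apply innerH_zero_r|]. simpl.
  rewrite (fun2_ext (fun n m => lincomb X c N n m + c N * tilde (X N) n m)
                    (fun n m => c N * tilde (X N) n m + lincomb X c N n m)) by (intros; ring).
  rewrite innerH_lin_r, Horth, IH by (apply tilde_Htilde, X_l2 || apply Htilde_lincomb || exact Hz).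
  ring.
Qed.

End SpanTilde.

Lemma normH2_eq0_of_orthogonal_dense (X : nat -> nat -> R) (z : nat -> nat -> R) :
  (forall k, l2 (X k)) -> closed_span_tilde_is_Htilde X -> in_Htilde z ->
  (forall k, innerH z (tilde (X k)) = 0) -> normH2 z = 0.
Proof.
  intros HX Hdense Hz Horth.
  (* For [L] in the span with [|z - L|^2 < |z|^2]: [|z|^2 = <z, z - L> <= |z| |z - L|]. *)
  destruct (Rle_lt_or_eq_dec 0 (normH2 z) (normH2_nonneg z Hz)) as [Hpos|]; [exfalso|auto].
  destruct (Hdense z Hz (normH2 z) Hpos) as [N [c Hc]].
  pose proof (Htilde_lincomb X HX c N) as HL.
  pose proof (innerH_Cauchy_Schwarz z _ Hz (Htilde_sub _ _ Hz HL)) as Hcs.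
  rewrite (fun2_ext (fun n m => z n m - lincomb X c N n m)
                    (fun n m => (-1) * lincomb X c N n m + z n m)) in Hcs, Hc by (intros; ring).
  rewrite innerH_lin_r, (innerH_lincomb_eq0 X HX), <- normH2_innerH in Hcs by assumption.
  nra.
Qed.

Lemma injective_of_closed_span (X : nat -> nat -> R) :
  (forall k, l2 (X k)) -> closed_span_tilde_is_Htilde X -> injective_family X.
Proof.
  intros HX Hdense T HT Hquad x Hx.
  set (s := fun i => T (unitv i)).
  pose proof HT as [Hl2 [_ [_ [Hs_HS _]]]].
  assert (Hs_row : forall i, l2 (s i)) by (intro; apply Hl2, l2_unitv).
  assert (Hs_sym : forall i j, s i j = s j i) by (intros; symmetry; now apply HS_matrix_sym).
  assert (HTs : forall y, l2 y -> T y = mx_op s y)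
    by (intros y Hy; apply functional_extensionality; intro; now apply HS_T_coord).
  assert (Hz : normH2 (mx_to_Htilde s) = 0).
  { apply (normH2_eq0_of_orthogonal_dense X); auto using Htilde_mx_to_Htilde.
    intro k. rewrite <- inner_mx_op_tilde, <- HTs; auto. }
  assert (Hs0 : forall i j, s i j = 0).
  { apply mx_eq0_of_mx_to_Htilde_eq0; [exact Hs_sym|].
    intros n m. apply normH2_eq0_coord; auto using Htilde_mx_to_Htilde. }
  rewrite HTs by assumption. apply functional_extensionality. intro i.
  apply Series_eq0. intro j. rewrite Hs0. ring.
Qed.

Lemma closed_span_of_injective (X : nat -> nat -> R) :
  (forall k, l2 (X k)) -> injective_family X -> closed_span_tilde_is_Htilde X.
Proof.
  intros HX Hinj y Hy eps Heps. apply NNPP. intro Hno.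
  assert (Hfar : forall v, span_tilde X v -> eps <= normH2 (fun n m => y n m - v n m)).
  { intros v [N [c ->]]. apply Rnot_lt_le. intro Hlt. apply Hno. eauto. }
  destruct (Htilde_exists_orthogonal (span_tilde X) (Htilde_span_tilde X HX) (span_tilde_zero X)
              (span_tilde_lin X) y Hy eps Heps Hfar) as [z [Hz [Hpos Horth]]].
  set (s := Htilde_to_mx z).
  destruct (Htilde_to_mx_HS z Hz) as [Hs_row Hs_HS].
  assert (Hs_sym : forall i j, s i j = s j i) by apply Htilde_to_mx_sym.
  assert (HT : is_HS_selfadjoint (mx_op s)) by now apply mx_op_HS_selfadjoint.
  assert (Hs0 : forall i j, s i j = 0).
  { intros i j. rewrite <- (inner_unitv (s i) j).
    change (inner (s i) (unitv j)) with (mx_op s (unitv j) i).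
    rewrite (Hinj (mx_op s) HT); [reflexivity| |apply l2_unitv].
    intro k. rewrite inner_mx_op_tilde by auto. unfold s. rewrite mx_to_Htilde_to_mx.
    apply Horth, span_tilde_tilde. }
  assert (normH2 z = 0); [|lra].
  rewrite <- (mx_to_Htilde_to_mx z). fold s.
  apply Series_eq0. intro n. apply Series_eq0. intro m. unfold mx_to_Htilde. rewrite Hs0. ring.
Qed.

Theorem mainTheorem11 (X : nat -> nat -> R) (hX : is_frame X) :
  injective_family X <-> closed_span_tilde_is_Htilde X.
Proof.
  destruct hX as [HX _]. split.
  - now apply closed_span_of_injective.
  - now apply injective_of_closed_span.
Qed.
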